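(* Let $A\in\mathbb{C}^{n\times n}$, let $1\le j\le n$, and fix vectors $\mathbf v,\mathbf c_1,\dots,\mathbf c_j\in\mathbb{C}^n$. Consider the map $\mathbf f$ of the variables $\mathbf q_1,\dots,\mathbf q_j\in\mathbb{C}^n$ and $\hat H=(h_{il})\in\mathbb{C}^{j\times j}$ (with columns $\hat{\mathbf h}_1,\dots,\hat{\mathbf h}_j$) whose components are the left-hand sides of the system $$\begin{cases} A[\mathbf q_1,\dots,\mathbf q_j]-[\mathbf q_1,\dots,\mathbf q_j][\hat{\mathbf h}_1,\dots,\hat{\mathbf h}_j]=O,\\ [\mathbf c_1,\dots,\mathbf c_i]^{\mathsf H}\mathbf q_i-(0,\dots,0,1)^\top=\mathbf 0\in\mathbb{C}^i, & i=1,\dots,j,\\ \mathbf q_1-\mathbf v=\mathbf 0,\\ h_{il}=0, & i>l+1.\end{cases}$$ Assume $(\mathbf q_1,\dots,\mathbf q_j,\hat H)$ satisfies this system and $h_{i+1,i}\neq0$ for $i=1,\dots,j-1$. Then the Jacobian of $\mathbf f$ at $(\mathbf q_1,\dots,\mathbf q_j,\hat H)$ is injective.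
   Context: The Jacobian is the complex derivative of $\mathbf f$ with respect to all entries of $\mathbf q_1,\dots,\mathbf q_j$ and all entries of $\hat H$ ($\mathbf f$ is holomorphic in these variables); injective means it has trivial kernel. $X^{\mathsf H}$ denotes conjugate transpose. *)

From mathcomp Require Import all_boot all_order all_algebra.
From mathcomp Require Import all_classical all_reals all_analysis.
From mathcomp Require Export complex.
Set Implicit Arguments. Unset Strict Implicit. Unset Printing Implicit Defensive.
Import Order.TTheory GRing.Theory Num.Theory.
Import numFieldNormedType.Exports.
Local Open Scope ring_scope.

(* Complex numbers: R[i] for R : realType (realType = the reals). Indices are 0-based:
   column l of Q is q_(l+1), column l of C is c_(l+1), H = \hat H. *)

(* The complex field C, as a numClosedFieldType (so that MathComp-Analysis'
   normed-space structures on numFieldTypes and their matrices apply). *)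
Definition Cx (R : realType) : numClosedFieldType := R[i].

Definition ctrmx (R : realType) m p (X : 'M[Cx R]_(m, p)) : 'M[Cx R]_(p, m) :=
  (map_mx Num.conj X)^T.

(* Its value is a 4-tuple of blocks:
   1. A Q - Q H                                            (n x j)
   2. the j blocks [c_1..c_i]^H q_i - e_i  (i = 1..j), stored in a j x j matrix:
      entry (k,l) with k <= l is the k-th component of the l-th block;
      entries with k > l are padded with the constant 0     (j x j)
   3. q_1 - v                                               (n x 1)
   4. the entries h_(k,l) with k > l+1 (1-based: i > l+1); other entries padded
      with the constant 0                                    (j x j)
   The constant zero paddings do not affect the Jacobian's kernel. *)
Definition arnoldi_f (R : realType) (n j : nat) (A : 'M[Cx R]_n) (v : 'cV[Cx R]_n)
  (C : 'M[Cx R]_(n, j)) (x : 'M[Cx R]_(n, j) * 'M[Cx R]_j) :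
  'M[Cx R]_(n, j) * 'M[Cx R]_j * 'cV[Cx R]_n * 'M[Cx R]_j :=
  let Q := x.1 in let H := x.2 in
  (A *m Q - Q *m H,
   \matrix_(k < j, l < j)
      (if (k <= l)%N then (ctrmx C *m Q) k l - (k == l)%:R else 0),
   \col_(r < n) (\sum_(l < j | (l == 0 :> nat)) Q r l) - v,
   \matrix_(k < j, l < j) (if (l.+1 < k)%N then H k l else 0)).

(* The map f is affine in (Q, H) up to the bilinear term - Q H, so its
   derivative at (Q, H) is h = (dQ, dH) |-> (A dQ - dQ H - Q dH, ...) and the
   remainder - dQ dH is o(h).

   The constraints make C^H Q unit lower triangular and
   H upper Hessenberg, and the kernel equations make the upper triangle of
   C^H dQ vanish, dH upper Hessenberg and dq_1 = 0. If the columns dq_1..dq_l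
   vanish, multiplying column l of A dQ = dQ H + Q dH by C^H shows that
   C^H Q dh_l has zero entries 1..l+1, while dh_l is supported on them; forward
   substitution gives dh_l = 0, and then dq_(l+1) h_(l+1,l) = 0 with
   h_(l+1,l) <> 0. Hence dQ = 0, and dH = 0 by forward substitution again. *)

From HB Require Import structures.
From mathcomp Require Import all_boot all_order all_algebra.
From mathcomp Require Import all_classical all_reals all_analysis.
From mathcomp Require Import complex.
Import Order.TTheory GRing.Theory Num.Theory.
Import numFieldNormedType.Exports.
Set Implicit Arguments. Unset Strict Implicit. Unset Printing Implicit Defensive.
Local Open Scope ring_scope.

Section MatrixNorm.
Context {K : numFieldType}.

Lemma norm_mx_entry_le {m n} (M : 'M[K]_(m, n)) i j : `|M i j| <= `|M|.
Proof.
rewrite [leRHS]/Num.Def.normr /= mx_normE.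
have -> : `|M i j| = (widen_itv `|M i j|%:itv : {nonneg K})%:num by [].
by rewrite num_le; apply/bigmax_geP; right; exists (i, j).
Qed.

Lemma mx_norm_le {m n} (M : 'M[K]_(m, n)) c :
  0 <= c -> (forall i j, `|M i j| <= c) -> `|M| <= c.
Proof.
move=> c_ge0 Mc; change (mx_norm M <= c).
have [->|/mx_norm_neq0[[i j] ->]] := eqVneq (mx_norm M) 0; first exact: c_ge0.
exact: Mc.
Qed.

Lemma norm_mulmx_le {m n p} (X : 'M[K]_(m, n)) (Y : 'M[K]_(n, p)) :
  `|X *m Y| <= n%:R * `|X| * `|Y|.
Proof.
apply: mx_norm_le => [|i k]; first by rewrite !mulr_ge0.
rewrite mxE (le_trans (ler_norm_sum _ _ _)) //.
have XY_le l : `|X i l * Y l k| <= `|X| * `|Y|.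
  by rewrite normrM ler_pM ?norm_mx_entry_le.
rewrite (le_trans (ler_sum _ (fun l _ => XY_le l))) //.
by rewrite sumr_const card_ord -mulrA mulr_natl.
Qed.

Lemma mulmx_eqo m n p :
  (fun x : 'M[K]_(m, n) * 'M[K]_(n, p) => x.1 *m x.2)
    =o_ (0 : 'M[K]_(m, n) * 'M[K]_(n, p)) id.
Proof.
apply/eqoP => _ /posnumP[e]; near=> x.
(* n.+1 rather than n, which may be 0 *)
have : `|x| <= n.+1%:R^-1 * e%:num.
  near: x; rewrite !near_simpl; apply: nbhs0_le.
  by rewrite mulr_gt0 // invr_gt0 ltr0Sn.
rewrite ler_pdivlMl ?ltr0Sn // => x_small.
have [x1_le x2_le] : `|x.1| <= `|x| /\ `|x.2| <= `|x|.
  by rewrite prod_normE !comparable_le_max ?real_comparable ?normr_real ?lexx ?orbT.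
rewrite (le_trans (norm_mulmx_le _ _)) // -mulrA.
rewrite (@le_trans _ _ (n.+1%:R * (`|x| * `|x|))) //.
  by rewrite ler_pM ?ler_nat ?mulr_ge0 // ler_pM.
by rewrite mulrA ler_pM ?mulr_ge0.
Unshelve. all: by end_near. Qed.

End MatrixNorm.

Lemma norm_pair0 (K : numDomainType) (U V : normedZmodType K) (u : U) :
  `|(u, 0 : V)| = `|u|.
Proof.
rewrite prod_normE normr0 /=.
by have [//|] := real_ge0P (normr_real u); rewrite normr_lt0.
Qed.

Lemma continuous_sum (K : numFieldType) (T : topologicalType)
    (W : normedModType K) (I : Type) (r : seq I) (P : pred I)
    (F : I -> T -> W) :
  (forall i, P i -> continuous (F i)) ->
  continuous (fun x => \sum_(i <- r | P i) F i x).
Proof.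
move=> Fc; elim: r => [|i r IHr] x.
  under eq_fun do rewrite big_nil; exact: cst_continuous.
under eq_fun do rewrite big_cons; case: ifP => Pi; last exact: IHr.
exact: continuousD (Fc i Pi x) (IHr x).
Qed.

Lemma linear_mx_continuous (K : numFieldType) (W : normedModType K) m n
    (f : 'M[K]_(m, n) -> W) :
  linear f -> continuous f.
Proof.
move=> lf; pose fL : {linear _ -> W} := HB.pack f (GRing.isLinear.Build _ _ _ _ f lf).
have -> : f = fun M => \sum_i \sum_j M i j *: f (delta_mx i j).
  apply/funext => M; rewrite {1}(matrix_sum_delta M) -[f]/(fL : _ -> _) linear_sum.
  by apply: eq_bigr => i _; rewrite linear_sum; apply: eq_bigr => j _; rewrite linearZ.
apply: continuous_sum => i _; apply: continuous_sum => j _ M.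
exact/continuousZr_tmp/coord_continuous.
Qed.

Lemma linear_pair_continuous (K : numFieldType) (U V W : normedModType K) :
  (forall g : U -> W, linear g -> continuous g) ->
  (forall g : V -> W, linear g -> continuous g) ->
  forall f : U * V -> W, linear f -> continuous f.
Proof.
move=> Ucont Vcont f lf.
have fl : continuous (fun u => f (u, 0)).
  apply: Ucont => a u w; rewrite -lf; congr f.
  by congr (_, _); rewrite /= scaler0 addr0.
have fr : continuous (fun w => f (0, w)).
  apply: Vcont => a u w; rewrite -lf; congr f.
  by congr (_, _); rewrite /= scaler0 addr0.
have -> : f = fun x => f (x.1, 0) + f (0, x.2).
  apply/funext => -[u w] /=; have -> : (u, w) = 1 *: (u, 0) + (0, w).
    by rewrite scale1r; congr (_, _); rewrite ?addr0 ?add0r.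
  by rewrite lf scale1r.
move=> x; apply: continuousD.
  exact: (continuous_comp (@cvg_fst _ _ _ _ _) (fl x.1)).
exact: (continuous_comp (@cvg_snd _ _ _ _ _) (fr x.2)).
Qed.

Section ArnoldiDerivative.
Variables (R : realType) (n j : nat) (A : 'M[Cx R]_n) (v : 'cV[Cx R]_n).
Variable C : 'M[Cx R]_(n, j).

Local Notation X := ('M[Cx R]_(n, j) * 'M[Cx R]_j)%type.
Local Notation Y := ('M[Cx R]_(n, j) * 'M[Cx R]_j * 'cV[Cx R]_n * 'M[Cx R]_j)%type.
Local Notation f := (arnoldi_f A v C).

Definition arnoldi_df (x h : X) : Y :=
  (A *m h.1 - (h.1 *m x.2 + x.1 *m h.2),
   \matrix_(k < j, l < j) (if (k <= l)%N then (ctrmx C *m h.1) k l else 0),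
   \col_(r < n) (\sum_(l < j | (l == 0 :> nat)) h.1 r l),
   \matrix_(k < j, l < j) (if (l.+1 < k)%N then h.2 k l else 0)).

Lemma arnoldi_df_linear x : linear (arnoldi_df x).
Proof.
move=> a [u1 u2] [w1 w2]; congr (_, _, _, _) => /=.
- rewrite !mulmxDr !mulmxDl -!scalemxAr -!scalemxAl scalerBr scalerDr.
  by rewrite addrACA opprD addrACA.
- apply/matrixP => k l; rewrite mulmxDr -scalemxAr !mxE.
  by case: ifP; rewrite ?mulr0 ?addr0.
- apply/matrixP => r c; rewrite !mxE mulr_sumr -big_split /=.
  by apply: eq_bigr => l _; rewrite !mxE.
- by apply/matrixP => k l; rewrite !mxE; case: ifP; rewrite ?mulr0 ?addr0.
Qed.

Definition arnoldi_dfL x : {linear X -> Y} :=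
  HB.pack (arnoldi_df x) (GRing.isLinear.Build _ _ _ _ _ (arnoldi_df_linear x)).

Lemma arnoldi_df_continuous x : continuous (arnoldi_df x).
Proof.
by apply: linear_pair_continuous (arnoldi_df_linear x); exact: linear_mx_continuous.
Qed.

Lemma arnoldi_f_shift (x h : X) :
  f (x + h) = f x + arnoldi_df x h - (h.1 *m h.2, 0, 0, 0).
Proof.
case: x h => [Q H] [h1 h2]; congr (_, _, _, _) => /=; rewrite ?subr0.
- rewrite mulmxDr mulmxDl !mulmxDr !opprD !addrA; congr (_ - _).
  by rewrite [LHS]addrAC (addrAC (A *m Q)).
- rewrite mulmxDr; apply/matrixP => k l; rewrite !mxE.
  by case: ifP => _; rewrite ?addr0 // addrAC.
- apply/matrixP => r c; rewrite !mxE addrAC -big_split /=.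
  by congr (_ - _); apply: eq_bigr => l _; rewrite mxE.
- by apply/matrixP => k l; rewrite !mxE; case: ifP; rewrite ?addr0.
Qed.

Lemma arnoldi_f_littleo (x : X) :
  f \o shift x = cst (f x) + arnoldi_dfL x +o_ (0 : X) id.
Proof.
pose rem (h : X) : Y := - (h.1 *m h.2, 0, 0, 0).
have rem_small : rem =o_ (0 : X) id.
  apply/eqoP => e e0; near=> h; rewrite normrN !norm_pair0.
  by near: h; apply: (proj1 (eqoP _ _ _) (mulmx_eqo _ _ _)).
apply: eqaddoE; have -> : f \o shift x = cst (f x) + arnoldi_dfL x + rem.
  by apply/funext => h; rewrite /= addrC arnoldi_f_shift.
by congr (_ + _); exact: rem_small.
Unshelve. all: by end_near. Qed.

Lemma diff_arnoldi_f (x : X) : 'd f x = arnoldi_df x :> (X -> Y).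
Proof.
rewrite -[arnoldi_df x]/(arnoldi_dfL x : X -> Y).
apply: diff_unique; [exact: arnoldi_df_continuous | exact: arnoldi_f_littleo].
Qed.

Lemma differentiable_arnoldi_f (x : X) : differentiable f x.
Proof.
apply/diff_locallyP; rewrite diff_arnoldi_f.
by split; [exact: arnoldi_df_continuous | exact: arnoldi_f_littleo].
Qed.

End ArnoldiDerivative.

Section Triangular.
Variable K : pzRingType.

Definition unit_lower q (M : 'M[K]_q) :=
  forall k l : 'I_q, (k <= l)%N -> M k l = (k == l)%:R.

Definition strictly_lower q (M : 'M[K]_q) :=
  forall k l : 'I_q, (k <= l)%N -> M k l = 0.

Definition upper_hessenberg q (M : 'M[K]_q) :=
  forall k l : 'I_q, (l.+1 < k)%N -> M k l = 0.

Lemma unit_lower_sum q (M : 'M[K]_q) (x : 'I_q -> K) (i : 'I_q) :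
  unit_lower M -> (forall l : 'I_q, (l < i)%N -> x l = 0) ->
  \sum_l M i l * x l = x i.
Proof.
move=> Mu x_lt; rewrite (bigD1 i) //= Mu // eqxx mul1r big1 ?addr0 // => l neq_li.
have [/x_lt ->|le_il] := ltnP l i; first by rewrite mulr0.
by rewrite Mu // eq_sym (negbTE neq_li) mul0r.
Qed.

Lemma unit_lower_mul_eq0 q (M : 'M[K]_q) (x : 'I_q -> K) m :
  unit_lower M -> (forall i : 'I_q, (m < i)%N -> x i = 0) ->
  (forall k : 'I_q, (k <= m)%N -> \sum_l M k l * x l = 0) ->
  forall i, x i = 0.
Proof.
move=> Mu x_gt Mx0.
suff x0 t (i : 'I_q) : (i < t)%N -> x i = 0 by move=> i; exact: (x0 i.+1).
elim: t i => [//|t IHt] i; rewrite ltnS leq_eqVlt => /predU1P[it|]; last exact: IHt.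
have [/x_gt //|le_im] := ltnP m i.
by rewrite -(unit_lower_sum Mu) ?Mx0 // => l; rewrite it => /IHt.
Qed.

Lemma upper_hessenberg_mulmx_entry p q (Y : 'M[K]_(p, q)) (M : 'M[K]_q) r l :
  upper_hessenberg M -> (Y *m M) r l = \sum_(i < q | (i <= l.+1)%N) Y r i * M i l.
Proof.
move=> Mh; rewrite mxE (bigID (fun i : 'I_q => (i <= l.+1)%N)) /=.
by rewrite [X in _ + X]big1 ?addr0 // => i; rewrite -ltnNge => /Mh ->; rewrite mulr0.
Qed.

Lemma mulmx_cols_eq0 p m q (Z : 'M[K]_(p, m)) (Y : 'M[K]_(m, q)) l :
  (forall r (i : 'I_q), (i <= l)%N -> Y r i = 0) ->
  forall k (i : 'I_q), (i <= l)%N -> (Z *m Y) k i = 0.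
Proof. by move=> Y_le k i le_il; rewrite mxE big1 // => r _; rewrite Y_le ?mulr0. Qed.

End Triangular.

Section ArnoldiKernel.
Variables (K : idomainType) (n j : nat) (A : 'M[K]_n) (B : 'M[K]_(j, n)).
Variables (Q : 'M[K]_(n, j)) (H : 'M[K]_j).
Hypothesis BQ_unit_lower : unit_lower (B *m Q).
Hypothesis H_hessenberg : upper_hessenberg H.
Hypothesis H_subdiag : forall k l : 'I_j, k = l.+1 :> nat -> H k l != 0.

Variables (dQ : 'M[K]_(n, j)) (dH : 'M[K]_j).
Hypothesis dQH_eq : A *m dQ = dQ *m H + Q *m dH.
Hypothesis BdQ_lower : strictly_lower (B *m dQ).
Hypothesis dQ_col0 : forall r (i : 'I_j), i = 0 :> nat -> dQ r i = 0.
Hypothesis dH_hessenberg : upper_hessenberg dH.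

Lemma arnoldi_kernel_dH_col (l : 'I_j) :
  (forall r (i : 'I_j), (i <= l)%N -> dQ r i = 0) -> forall i, dH i l = 0.
Proof.
move=> dQ_le; apply: (unit_lower_mul_eq0 BQ_unit_lower (m := l.+1)).
  by move=> i /dH_hessenberg.
move=> k le_kl; have -> : \sum_i (B *m Q) k i * dH i l = (B *m (A *m dQ - dQ *m H)) k l.
  by rewrite dQH_eq addrAC subrr add0r mulmxA mxE.
rewrite mulmxBr !mulmxA mxE (mulmx_cols_eq0 _ dQ_le) // mxE.
rewrite upper_hessenberg_mulmx_entry // big1 ?oppr0 ?add0r // => i le_il.
have [lt_li|le_il'] := ltnP l i; last by rewrite (mulmx_cols_eq0 _ dQ_le) ?mul0r.
by rewrite BdQ_lower ?mul0r // (leq_trans le_kl).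
Qed.

Lemma arnoldi_kernel_dQ_col (l l' : 'I_j) : l' = l.+1 :> nat ->
  (forall r (i : 'I_j), (i <= l)%N -> dQ r i = 0) -> forall r, dQ r l' = 0.
Proof.
move=> l'E dQ_le r; have /matrixP/(_ r l) := dQH_eq.
rewrite (mulmx_cols_eq0 _ dQ_le) // mxE [X in _ + X]mxE big1 => [|i _]; last first.
  by rewrite (arnoldi_kernel_dH_col dQ_le) mulr0.
rewrite addr0 upper_hessenberg_mulmx_entry // (bigD1 l') ?l'E //= big1 ?addr0.
  by move/esym/eqP; rewrite mulf_eq0 (negbTE (H_subdiag l'E)) orbF => /eqP.
move=> i /andP[]; rewrite leq_eqVlt ltnS -l'E val_eqE => /predU1P[->|/dQ_le ->].
  by rewrite eqxx.
by rewrite mul0r.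
Qed.

Lemma arnoldi_kernel_dQ : dQ = 0.
Proof.
suff dQ_le t : (t < j)%N -> forall r (i : 'I_j), (i <= t)%N -> dQ r i = 0.
  by apply/matrixP => r i; rewrite mxE (dQ_le i).
elim: t => [_|t IHt lt_tj] r i; first by rewrite leqn0 => /eqP; apply: dQ_col0.
rewrite leq_eqVlt ltnS => /predU1P[iE|]; last exact: IHt (ltnW lt_tj) r i.
exact: (arnoldi_kernel_dQ_col (l := Ordinal (ltnW lt_tj)) iE (IHt (ltnW lt_tj))).
Qed.

Lemma arnoldi_kernel_eq0 : dQ = 0 /\ dH = 0.
Proof.
split; first exact: arnoldi_kernel_dQ.
apply/matrixP => i l; rewrite mxE arnoldi_kernel_dH_col // => r k _.
by rewrite arnoldi_kernel_dQ mxE.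
Qed.

End ArnoldiKernel.

Section ArnoldiEquations.
Variables (R : realType) (n j : nat) (A : 'M[Cx R]_n) (v : 'cV[Cx R]_n).
Variable C : 'M[Cx R]_(n, j).

Lemma arnoldi_f_eq0 (Q : 'M[Cx R]_(n, j)) (H : 'M[Cx R]_j) :
  arnoldi_f A v C (Q, H) = 0 -> unit_lower (ctrmx C *m Q) /\ upper_hessenberg H.
Proof.
case=> _ /matrixP CQ_eq _ /matrixP H_eq; split=> k l le_kl.
  by move: (CQ_eq k l); rewrite !mxE le_kl => /eqP; rewrite subr_eq0 => /eqP.
by move: (H_eq k l); rewrite !mxE le_kl.
Qed.

Lemma arnoldi_df_eq0 (x : 'M[Cx R]_(n, j) * 'M[Cx R]_j) dQ dH :
  arnoldi_df A C x (dQ, dH) = 0 ->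
  [/\ A *m dQ = dQ *m x.2 + x.1 *m dH, strictly_lower (ctrmx C *m dQ),
      forall r (i : 'I_j), i = 0 :> nat -> dQ r i = 0 & upper_hessenberg dH].
Proof.
case=> /eqP; rewrite subr_eq0 => /eqP dQH_eq /matrixP CdQ_eq /matrixP dQ_eq.
move=> /matrixP dH_eq; split=> // [k l le_kl|r i i0|k l lt_lk].
- by move: (CdQ_eq k l); rewrite !mxE le_kl.
- move: (dQ_eq r ord0); rewrite !mxE (big_pred1 i) // => l /=.
  by rewrite -val_eqE /= i0.
- by move: (dH_eq k l); rewrite !mxE lt_lk.
Qed.

End ArnoldiEquations.

Theorem proposition2 (R : realType) (n j : nat) (A : 'M[Cx R]_n)
  (v : 'cV[Cx R]_n) (C : 'M[Cx R]_(n, j))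
  (Q : 'M[Cx R]_(n, j)) (H : 'M[Cx R]_j) :
  (1 <= j)%N -> (j <= n)%N ->
  arnoldi_f A v C (Q, H) = 0 ->
  (forall k l : 'I_j, k = l.+1 :> nat -> H k l != 0) ->
  differentiable (arnoldi_f A v C) (nbhs (Q, H)) /\
  injective ('d (arnoldi_f A v C) (nbhs (Q, H))).
Proof.
move=> _ _ /arnoldi_f_eq0[CQ_unit_lower H_hessenberg] H_subdiag.
split; first exact: differentiable_arnoldi_f.
rewrite (_ : ('d _ _ : _ -> _) = arnoldi_dfL A C (Q, H)); last exact: diff_arnoldi_f.
apply: raddf_inj => -[dQ dH] /arnoldi_df_eq0[dQH_eq CdQ_lower dQ_col0 dH_hessenberg].
by have [-> ->] := arnoldi_kernel_eq0 CQ_unit_lower H_hessenberg H_subdiag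
  dQH_eq CdQ_lower dQ_col0 dH_hessenberg.
Qed.
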